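(* Let $f:\mathbb{E}\to\mathbb{R}$ be continuous on some neighborhood of $\bar x\in\mathbb{E}$ and $\ell$-stable at $\bar x$, and suppose $f$ is strongly pseudoconvex at the point $\bar x$. Then $\bar x$ is an isolated local minimizer of second order of $f$ if and only if $\nabla f(\bar x)=0$ (the Fréchet derivative of $f$ at $\bar x$ exists under these hypotheses).
   Context: $\mathbb{E}$ is a real finite-dimensional Euclidean space with norm $\|\cdot\|$. Lower Dini directional derivative: $f'_D(y;u)=\liminf_{t\downarrow 0}t^{-1}[f(y+tu)-f(y)]$. $f$ is $\ell$-stable at $x$ iff there exist a neighborhood $U$ of $x$ and $K>0$ with $|f'_D(y;u)-f'_D(x;u)|\le K\|y-x\|\,\|u\|$ for all $y\in U$, $u\in\mathbb{E}$. $f$ is strongly pseudoconvex at $x$ iff for every $u\in\mathbb{E}$ with $\|u\|=1$ and $f'_D(x;u)=0$ there exist $\delta>0$, $\alpha>0$ with $f(x+tu)\ge f(x)+\alpha t^2$ for all $t\in(0,\delta)$. A point $\bar x$ is an isolated local minimizer of second order iff there exist a neighborhood $N$ of $\bar x$ and $C>0$ with $f(x)>f(\bar x)+C\|x-\bar x\|^2$ for all $x\in N\setminus\{\bar x\}$. *)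

(* classical reals. The Euclidean space E is modelled as R^n,
   vectors being functions Fin.t n -> R with the standard inner product. *)
From Stdlib Require Import Reals Lra.
From Stdlib Require Fin.
Open Scope R_scope.

Definition Vec (n : nat) := Fin.t n -> R.

Fixpoint sumfin (n : nat) : (Fin.t n -> R) -> R :=
  match n return (Fin.t n -> R) -> R with
  | O => fun _ => 0
  | S m => fun g => g Fin.F1 + sumfin m (fun i => g (Fin.FS i))
  end.

Definition vadd {n} (x y : Vec n) : Vec n := fun i => x i + y i.
Definition vsub {n} (x y : Vec n) : Vec n := fun i => x i - y i.
Definition vscal {n} (t : R) (x : Vec n) : Vec n := fun i => t * x i.
Definition vzero {n} : Vec n := fun _ => 0.
Definition inner {n} (x y : Vec n) : R := sumfin n (fun i => x i * y i).
Definition vnorm {n} (x : Vec n) : R := sqrt (inner x x).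

Inductive Rbar := Fin (r : R) | PInf | MInf.

Definition is_liminf_0plus (phi : R -> R) (l : Rbar) : Prop :=
  match l with
  | Fin a =>
      (forall eps, 0 < eps -> exists d, 0 < d /\
         forall t, 0 < t < d -> a - eps < phi t) /\
      (forall eps, 0 < eps -> forall d, 0 < d ->
         exists t, 0 < t < d /\ phi t < a + eps)
  | PInf => forall M, exists d, 0 < d /\ forall t, 0 < t < d -> M < phi t
  | MInf => forall M d, 0 < d -> exists t, 0 < t < d /\ phi t < M
  end.

Definition dini {n} (f : Vec n -> R) (y u : Vec n) (l : Rbar) : Prop :=
  is_liminf_0plus (fun t => (f (vadd y (vscal t u)) - f y) / t) l.

Definition continuous_at {n} (f : Vec n -> R) (y : Vec n) : Prop :=
  forall eps, 0 < eps -> exists d, 0 < d /\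
    forall z, vnorm (vsub z y) < d -> Rabs (f z - f y) < eps.

Definition continuous_near {n} (f : Vec n -> R) (x : Vec n) : Prop :=
  exists r, 0 < r /\ forall y, vnorm (vsub y x) < r -> continuous_at f y.

(* l-stability at x (both Dini derivatives are required to be finite) *)
Definition l_stable {n} (f : Vec n -> R) (x : Vec n) : Prop :=
  exists r K, 0 < r /\ 0 < K /\
    forall y u, vnorm (vsub y x) < r ->
      exists a b, dini f y u (Fin a) /\ dini f x u (Fin b) /\
        Rabs (a - b) <= K * vnorm (vsub y x) * vnorm u.

Definition strongly_pseudoconvex {n} (f : Vec n -> R) (x : Vec n) : Prop :=
  forall u, vnorm u = 1 -> dini f x u (Fin 0) ->
    exists d alpha, 0 < d /\ 0 < alpha /\
      forall t, 0 < t < d -> f (vadd x (vscal t u)) >= f x + alpha * t ^ 2.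

Definition isolated_min_2 {n} (f : Vec n -> R) (xb : Vec n) : Prop :=
  exists r C, 0 < r /\ 0 < C /\
    forall x, vnorm (vsub x xb) < r -> x <> xb ->
      f x > f xb + C * vnorm (vsub x xb) ^ 2.

Definition frechet_grad {n} (f : Vec n -> R) (x g : Vec n) : Prop :=
  forall eps, 0 < eps -> exists d, 0 < d /\
    forall y, vnorm (vsub y x) < d ->
      Rabs (f y - f x - inner g (vsub y x)) <= eps * vnorm (vsub y x).

(* Let h u be the lower Dini derivative of f at xb in direction u.  By
   l-stability every Dini derivative of f near xb lies within K |y - xb| |u| of h,
   and since f is continuous a mean-value argument along segments gives
   |f (y + w) - f y - h w| <= K (|y - xb| + |w|) |w|.  Comparing three such
   estimates at scale t shows that h is additive, hence linear, hence h = <g, .>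
   and g is the Frechet gradient.  At a local minimizer h >= 0, so g = 0.
   Conversely, if g = 0 the estimate says that f is flat to second order near xb:
   strong pseudoconvexity gives quadratic growth along each unit direction,
   flatness spreads it to a neighbourhood of that direction, and compactness of
   the unit sphere makes the growth uniform. *)

From Stdlib Require Import Reals Lra Lia Rtopology.
From Stdlib Require Import FunctionalExtensionality Classical IndefiniteDescription.
Open Scope R_scope.

Ltac vec_ring :=
  apply functional_extensionality; intro; unfold vadd, vsub, vscal, vzero; ring.

Lemma sumfin_ext n (F G : Fin.t n -> R) :
  (forall i, F i = G i) -> sumfin n F = sumfin n G.
Proof.
  induction n as [|n IH]; intros E; simpl; [reflexivity|].
  now rewrite E, (IH _ (fun i => G (Fin.FS i))).
Qed.

Lemma sumfin_add n (F G : Fin.t n -> R) :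
  sumfin n (fun i => F i + G i) = sumfin n F + sumfin n G.
Proof.
  induction n as [|n IH]; simpl; [lra|].
  rewrite (IH (fun i => F (Fin.FS i))). lra.
Qed.

Lemma sumfin_scal n c (F : Fin.t n -> R) :
  sumfin n (fun i => c * F i) = c * sumfin n F.
Proof.
  induction n as [|n IH]; simpl; [lra|].
  rewrite (IH (fun i => F (Fin.FS i))). lra.
Qed.

Lemma sumfin_nonneg n (F : Fin.t n -> R) :
  (forall i, 0 <= F i) -> 0 <= sumfin n F.
Proof.
  induction n as [|n IH]; intros H; simpl; [lra|].
  specialize (IH (fun i => F (Fin.FS i)) (fun i => H (Fin.FS i))).
  specialize (H Fin.F1). lra.
Qed.

Lemma inner_nonneg n (v : Vec n) : 0 <= inner v v.
Proof. apply sumfin_nonneg. intros; nra. Qed.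

Lemma inner_scal_r n t (a b : Vec n) : inner a (vscal t b) = t * inner a b.
Proof.
  unfold inner, vscal. rewrite <- sumfin_scal. apply sumfin_ext. intros; ring.
Qed.

Lemma inner_zero_l n (v : Vec n) : inner vzero v = 0.
Proof.
  unfold inner, vzero. cbv beta. rewrite (sumfin_scal n 0 v). ring.
Qed.

Lemma inner_add_self n (a b : Vec n) :
  inner (vadd a b) (vadd a b) = inner a a + 2 * inner a b + inner b b.
Proof.
  unfold inner, vadd. rewrite <- sumfin_scal, <- !sumfin_add.
  apply sumfin_ext. intros; ring.
Qed.

Lemma quadratic_nonneg_discr A S B :
  0 <= B -> (forall t, 0 <= A + 2 * S * t + B * t ^ 2) -> S ^ 2 <= A * B.
Proof.
  intros HB Hq. destruct (Rle_lt_or_eq_dec 0 B HB) as [Bpos|<-].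
  - specialize (Hq (- S / B)).
    replace (A + 2 * S * (- S / B) + B * (- S / B) ^ 2) with ((A * B - S ^ 2) / B)
      in Hq by (field; lra).
    apply Rmult_le_compat_r with (r := B) in Hq; [|lra].
    unfold Rdiv in Hq. rewrite Rmult_assoc, Rinv_l in Hq; lra.
  - destruct (Req_dec S 0) as [->|HS]; [lra|].
    specialize (Hq (- (A + 1) / (2 * S))).
    replace (A + 2 * S * (- (A + 1) / (2 * S)) + 0 * (- (A + 1) / (2 * S)) ^ 2)
      with (-1) in Hq by (field; lra). lra.
Qed.

Lemma inner_sym n (a b : Vec n) : inner a b = inner b a.
Proof. apply sumfin_ext. intros; ring. Qed.

Lemma inner_scal_self n t (a : Vec n) : inner (vscal t a) (vscal t a) = t ^ 2 * inner a a.
Proof. rewrite inner_scal_r, inner_sym, inner_scal_r. ring. Qed.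

Lemma cauchy_schwarz n (a b : Vec n) : inner a b ^ 2 <= inner a a * inner b b.
Proof.
  apply quadratic_nonneg_discr; [apply inner_nonneg|]. intros t.
  pose proof (inner_nonneg _ (vadd a (vscal t b))) as H.
  rewrite inner_add_self, inner_scal_r, inner_scal_self in H. lra.
Qed.

Lemma vnorm_nonneg n (v : Vec n) : 0 <= vnorm v.
Proof. apply sqrt_pos. Qed.

Lemma vnorm_scal n t (v : Vec n) : vnorm (vscal t v) = Rabs t * vnorm v.
Proof.
  unfold vnorm. rewrite inner_scal_self, sqrt_mult_alt by nra.
  now rewrite <- sqrt_Rsqr_abs, Rsqr_pow2.
Qed.

Lemma vnorm_triangle n (a b : Vec n) : vnorm (vadd a b) <= vnorm a + vnorm b.
Proof.
  unfold vnorm. rewrite inner_add_self.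
  pose proof (inner_nonneg _ a) as Ha. pose proof (inner_nonneg _ b) as Hb.
  assert (CS : inner a b <= sqrt (inner a a) * sqrt (inner b b)).
  { rewrite <- sqrt_mult_alt by assumption.
    apply Rle_trans with (Rabs (inner a b)); [apply Rle_abs|].
    rewrite <- (sqrt_pow2 (Rabs (inner a b))) by apply Rabs_pos. apply sqrt_le_1_alt.
    rewrite pow2_abs. apply cauchy_schwarz. }
  rewrite <- (sqrt_pow2 (sqrt (inner a a) + sqrt (inner b b)))
    by (pose proof (sqrt_pos (inner a a)); pose proof (sqrt_pos (inner b b)); lra).
  apply sqrt_le_1_alt.
  replace ((sqrt (inner a a) + sqrt (inner b b)) ^ 2)
    with (sqrt (inner a a) ^ 2 + 2 * (sqrt (inner a a) * sqrt (inner b b)) + sqrt (inner b b) ^ 2)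
    by ring.
  rewrite !pow2_sqrt by assumption. lra.
Qed.

Lemma vnorm_sub_sym n (a b : Vec n) : vnorm (vsub a b) = vnorm (vsub b a).
Proof.
  replace (vsub a b) with (vscal (-1) (vsub b a)) by vec_ring.
  rewrite vnorm_scal, Rabs_left by lra. ring.
Qed.

Lemma vnorm_sub_ge n (a b : Vec n) : Rabs (vnorm a - vnorm b) <= vnorm (vsub a b).
Proof.
  pose proof (vnorm_triangle _ b (vsub a b)) as Hb.
  pose proof (vnorm_triangle _ a (vsub b a)) as Ha.
  replace (vadd b (vsub a b)) with a in Hb by vec_ring.
  replace (vadd a (vsub b a)) with b in Ha by vec_ring.
  rewrite vnorm_sub_sym in Ha. apply Rabs_le. lra.
Qed.

Lemma vnorm_zero n : vnorm (@vzero n) = 0.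
Proof.
  replace (@vzero n) with (vscal 0 (@vzero n)) by vec_ring.
  rewrite vnorm_scal, Rabs_R0. ring.
Qed.

Lemma inner_cons n (a b : Vec (S n)) :
  inner a b = a Fin.F1 * b Fin.F1 + inner (fun i => a (Fin.FS i)) (fun i => b (Fin.FS i)).
Proof. reflexivity. Qed.

Lemma sqr_coord_le_inner n (v : Vec n) i : v i ^ 2 <= inner v v.
Proof.
  induction n as [|n IH].
  - inversion i.
  - rewrite inner_cons. pattern i. apply Fin.caseS'.
    + pose proof (inner_nonneg _ (fun i => v (Fin.FS i))). nra.
    + intros j. specialize (IH (fun i => v (Fin.FS i)) j). simpl in IH. nra.
Qed.

Lemma vnorm_coord n (v : Vec n) i : Rabs (v i) <= vnorm v.
Proof.
  rewrite <- (sqrt_pow2 (Rabs (v i))) by apply Rabs_pos. apply sqrt_le_1_alt.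
  rewrite pow2_abs. apply sqr_coord_le_inner.
Qed.

Lemma vnorm_eq0 n (v : Vec n) : vnorm v = 0 -> v = vzero.
Proof.
  intros H. apply functional_extensionality. intros i.
  pose proof (vnorm_coord _ v i). pose proof (Rabs_pos (v i)).
  destruct (Req_dec (v i) 0) as [|Hne]; [assumption|].
  apply Rabs_no_R0 in Hne. lra.
Qed.

Lemma vnorm_cons n (v : Vec (S n)) :
  vnorm v <= Rabs (v Fin.F1) + vnorm (fun i => v (Fin.FS i)).
Proof.
  unfold vnorm. rewrite inner_cons.
  set (A := inner (fun i => v (Fin.FS i)) (fun i => v (Fin.FS i))).
  assert (HA : 0 <= A) by apply inner_nonneg.
  pose proof (sqrt_pos A). pose proof (Rabs_pos (v Fin.F1)).
  rewrite <- (sqrt_pow2 (Rabs (v Fin.F1) + sqrt A)) by lra.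
  apply sqrt_le_1_alt.
  replace ((Rabs (v Fin.F1) + sqrt A) ^ 2)
    with (Rabs (v Fin.F1) ^ 2 + 2 * Rabs (v Fin.F1) * sqrt A + sqrt A ^ 2) by ring.
  rewrite pow2_sqrt, pow2_abs by assumption. nra.
Qed.

Definition vcons {n} (a : R) (w : Vec n) : Vec (S n) :=
  fun j => Fin.caseS' j (fun _ => R) a w.

Lemma vcons_eta n (v : Vec (S n)) : v = vcons (v Fin.F1) (fun i => v (Fin.FS i)).
Proof. apply functional_extensionality. intros j. pattern j. now apply Fin.caseS'. Qed.

Lemma linear_functional_inner n (L : Vec n -> R) :
  (forall a b, L (vadd a b) = L a + L b) -> (forall c a, L (vscal c a) = c * L a) ->
  exists g, forall v, L v = inner g v.
Proof.
  induction n as [|n IH]; intros Ladd Lscal.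
  - exists vzero. intros v.
    replace v with (vscal 0 v) by (apply functional_extensionality; intros i; inversion i).
    rewrite Lscal. unfold inner. simpl. ring.
  - destruct (IH (fun w => L (vcons 0 w))) as [g Hg].
    + intros a b. rewrite <- Ladd. f_equal. apply functional_extensionality. intros j.
      pattern j. apply Fin.caseS'; unfold vadd, vscal; simpl; [ring|reflexivity].
    + intros c a. rewrite <- Lscal. f_equal. apply functional_extensionality. intros j.
      pattern j. apply Fin.caseS'; unfold vadd, vscal; simpl; [ring|reflexivity].
    + exists (vcons (L (vcons 1 vzero)) g). intros v.
      assert (Hv : v = vadd (vscal (v Fin.F1) (vcons 1 vzero)) (vcons 0 (fun i => v (Fin.FS i)))).
      { rewrite (vcons_eta _ v) at 1. apply functional_extensionality. intros j.
        pattern j. apply Fin.caseS'; intros; unfold vadd, vscal, vzero; simpl; ring. }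
      rewrite Hv at 1. rewrite Ladd, Lscal, Hg, inner_cons. simpl.
      rewrite Rmult_comm. reflexivity.
Qed.

Lemma Rabs_le_inv a b : Rabs a <= b -> - b <= a <= b.
Proof.
  intros H. pose proof (Rle_abs a). pose proof (Rle_abs (- a)). rewrite Rabs_Ropp in *. lra.
Qed.

Lemma Rle_0_of_small_bound a C r N :
  0 < r -> 0 <= N -> (forall t, 0 < t -> t * N < r -> a <= t * C) -> a <= 0.
Proof.
  intros Hr HN H. apply Rnot_lt_le. intros Ha.
  pose proof (Rabs_pos C) as HC. pose proof (Rle_abs C).
  set (t := Rmin (r / (N + 1)) (a / (2 * (Rabs C + 1)))).
  assert (Ht0 : 0 < t) by (apply Rmin_glb_lt; apply Rdiv_lt_0_compat; lra).
  assert (Ht1 : t * (N + 1) <= r).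
  { apply Rle_trans with (r / (N + 1) * (N + 1)); [apply Rmult_le_compat_r; [lra|apply Rmin_l]|].
    right. field. lra. }
  assert (Ht2 : t * (2 * (Rabs C + 1)) <= a).
  { apply Rle_trans with (a / (2 * (Rabs C + 1)) * (2 * (Rabs C + 1))).
    - apply Rmult_le_compat_r; [lra|apply Rmin_r].
    - right. field. lra. }
  specialize (H t Ht0 ltac:(nra)). nra.
Qed.

Lemma continuity_pt_ball f c eps :
  continuity_pt f c -> 0 < eps ->
  exists d, 0 < d /\ forall t, Rabs (t - c) < d -> Rabs (f t - f c) < eps.
Proof.
  intros Hc He. destruct (Hc eps He) as [d [Hd Hf]].
  exists d. split; [assumption|]. intros t Ht.
  destruct (Req_dec t c) as [->|Hne].
  - rewrite Rminus_diag, Rabs_R0. assumption.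
  - apply (Hf t). split; [split; [exact I|auto]|exact Ht].
Qed.

Lemma nonneg_of_left_approx g c :
  continuity_pt g c -> (forall d, 0 < d -> exists t, c - d < t <= c /\ 0 <= g t) -> 0 <= g c.
Proof.
  intros Hc Happrox. apply Rnot_lt_le. intros Hneg.
  destruct (continuity_pt_ball g c (- g c) Hc) as [d [Hd Hball]]; [lra|].
  destruct (Happrox d Hd) as [t [Ht Hgt]].
  specialize (Hball t ltac:(apply Rabs_def1; lra)). apply Rabs_def2 in Hball. lra.
Qed.

Lemma increment_ge_of_right_increments (psi : R -> R) a b m :
  a <= b -> (forall t, a <= t <= b -> continuity_pt psi t) ->
  (forall t, a <= t < b -> forall d, 0 < d ->
     exists tau, 0 < tau < d /\ m * tau < psi (t + tau) - psi t) ->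
  m * (b - a) <= psi b - psi a.
Proof.
  intros Hab Hcont Hincr.
  (* The supremum of the points where G >= 0 is one of them by continuity,
     and it cannot lie below b because of the right increments. *)
  set (G := fun t => psi t - psi a - m * (t - a)).
  enough (0 <= G b) by (unfold G in *; lra).
  set (E := fun t => a <= t <= b /\ 0 <= G t).
  assert (Ea : E a) by (unfold E, G; split; lra).
  destruct (completeness E) as [c [Hub Hlub]];
    [exists b; intros t [Ht _]; lra|exists a; exact Ea|].
  assert (Hac : a <= c) by (apply Hub, Ea).
  assert (Hcb : c <= b) by (apply Hlub; intros t [Ht _]; lra).
  assert (Gc : 0 <= G c).
  { apply nonneg_of_left_approx.
    - apply continuity_pt_minus; [apply continuity_pt_minus|apply continuity_pt_scal].
      + apply Hcont. lra.
      + apply continuity_pt_const. intros ? ?. reflexivity.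
      + apply continuity_pt_minus; [apply derivable_continuous_pt, derivable_pt_id|].
        apply continuity_pt_const. intros ? ?. reflexivity.
    - intros d Hd. apply not_all_not_ex. intros Hno.
      assert (c <= c - d); [|lra].
      apply Hlub. intros t [Ht Gt]. apply Rnot_lt_le. intros Htd.
      apply (Hno t). split; [split; [lra|apply Hub; split; assumption]|assumption]. }
  destruct (Rle_lt_or_eq_dec c b Hcb) as [Hlt|<-]; [|exact Gc].
  destruct (Hincr c (conj Hac Hlt) (b - c)) as [tau [Htau Hm]]; [lra|].
  assert (c + tau <= c); [|lra].
  apply Hub. split; [lra|]. unfold G in *. lra.
Qed.

Lemma increment_le_of_right_increments (psi : R -> R) a b M :
  a <= b -> (forall t, a <= t <= b -> continuity_pt psi t) ->
  (forall t, a <= t < b -> forall d, 0 < d ->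
     exists tau, 0 < tau < d /\ psi (t + tau) - psi t < M * tau) ->
  psi b - psi a <= M * (b - a).
Proof.
  intros Hab Hcont Hincr.
  enough (- M * (b - a) <= - psi b - - psi a) by lra.
  apply (increment_ge_of_right_increments (fun t => - psi t)); [assumption| |].
  - intros t Ht. apply continuity_pt_opp, Hcont, Ht.
  - intros t Ht d Hd. destruct (Hincr t Ht d Hd) as [tau [Htau Hm]].
    exists tau. split; [assumption|lra].
Qed.

Lemma is_liminf_0plus_unique phi a b :
  is_liminf_0plus phi (Fin a) -> is_liminf_0plus phi (Fin b) -> a = b.
Proof.
  intros [Ha1 Ha2] [Hb1 Hb2].
  destruct (Rtotal_order a b) as [Hlt|[Heq|Hlt]]; [exfalso| assumption |exfalso].
  - destruct (Hb1 ((b - a) / 2)) as [d [Hd Hlow]]; [lra|].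
    destruct (Ha2 ((b - a) / 2) ltac:(lra) d Hd) as [t [Ht Hup]].
    specialize (Hlow t Ht). lra.
  - destruct (Ha1 ((a - b) / 2)) as [d [Hd Hlow]]; [lra|].
    destruct (Hb2 ((a - b) / 2) ltac:(lra) d Hd) as [t [Ht Hup]].
    specialize (Hlow t Ht). lra.
Qed.

Lemma is_liminf_0plus_rescale phi c l : 0 < c ->
  is_liminf_0plus phi (Fin l) -> is_liminf_0plus (fun t => c * phi (c * t)) (Fin (c * l)).
Proof.
  intros Hc [Hlow Hup]. split.
  - intros eps He. destruct (Hlow (eps / c)) as [d [Hd Hphi]]; [apply Rdiv_lt_0_compat; lra|].
    exists (d / c). split; [apply Rdiv_lt_0_compat; lra|]. intros t [Ht0 Ht].
    assert (Hct : 0 < c * t < d).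
    { split; [nra|]. apply Rmult_lt_compat_l with (r := c) in Ht; [|lra].
      replace (c * (d / c)) with d in Ht by (field; lra). lra. }
    specialize (Hphi _ Hct). apply Rmult_lt_compat_l with (r := c) in Hphi; [|lra].
    replace (c * (l - eps / c)) with (c * l - eps) in Hphi by (field; lra). lra.
  - intros eps He d Hd.
    destruct (Hup (eps / c) ltac:(apply Rdiv_lt_0_compat; lra) (c * d) ltac:(nra))
      as [s [[Hs0 Hs] Hphi]].
    exists (s / c). split.
    + split; [apply Rdiv_lt_0_compat; lra|].
      apply Rmult_lt_reg_l with c; [lra|]. replace (c * (s / c)) with s by (field; lra). lra.
    + replace (c * (s / c)) with s by (field; lra).
      apply Rmult_lt_compat_l with (r := c) in Hphi; [|lra].
      replace (c * (l + eps / c)) with (c * l + eps) in Hphi by (field; lra). lra.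
Qed.

Lemma is_liminf_0plus_of_limit phi l :
  (forall eps, 0 < eps -> exists d, 0 < d /\ forall t, 0 < t < d -> Rabs (phi t - l) < eps) ->
  is_liminf_0plus phi (Fin l).
Proof.
  intros Hlim. split.
  - intros eps He. destruct (Hlim eps He) as [d [Hd Hphi]].
    exists d. split; [assumption|]. intros t Ht. specialize (Hphi t Ht).
    apply Rabs_def2 in Hphi. lra.
  - intros eps He d Hd. destruct (Hlim eps He) as [d0 [Hd0 Hphi]].
    exists (Rmin d d0 / 2). pose proof (Rmin_l d d0). pose proof (Rmin_r d d0).
    pose proof (Rmin_glb_lt _ _ _ Hd Hd0).
    split; [lra|]. specialize (Hphi (Rmin d d0 / 2) ltac:(lra)).
    apply Rabs_def2 in Hphi. lra.
Qed.

Lemma dini_unique n (f : Vec n -> R) y u a b :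
  dini f y u (Fin a) -> dini f y u (Fin b) -> a = b.
Proof. apply is_liminf_0plus_unique. Qed.

Lemma dini_scal n (f : Vec n -> R) y u l c :
  0 < c -> dini f y u (Fin l) -> dini f y (vscal c u) (Fin (c * l)).
Proof.
  intros Hc Hl. unfold dini.
  replace (fun t => (f (vadd y (vscal t (vscal c u))) - f y) / t)
    with (fun t => c * ((f (vadd y (vscal (c * t) u)) - f y) / (c * t))).
  - exact (is_liminf_0plus_rescale _ c l Hc Hl).
  - apply functional_extensionality. intros t.
    replace (vscal t (vscal c u)) with (vscal (c * t) u) by vec_ring.
    destruct (Req_dec t 0) as [->|Ht].
    + rewrite Rmult_0_r. unfold Rdiv. rewrite Rinv_0. ring.
    + field. lra.
Qed.

Lemma dini_right_increments n (f : Vec n -> R) y w a eps d :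
  dini f y w (Fin a) -> 0 < eps -> 0 < d ->
  (exists tau, 0 < tau < d /\ (a - eps) * tau < f (vadd y (vscal tau w)) - f y) /\
  (exists tau, 0 < tau < d /\ f (vadd y (vscal tau w)) - f y < (a + eps) * tau).
Proof.
  intros [Hlow Hup] He Hd. split.
  - destruct (Hlow eps He) as [d0 [Hd0 Hq]].
    set (tau := Rmin d d0 / 2).
    assert (Htau : 0 < tau < Rmin d d0)
      by (pose proof (Rmin_glb_lt _ _ _ Hd Hd0); unfold tau; lra).
    exists tau. pose proof (Rmin_l d d0). pose proof (Rmin_r d d0).
    split; [lra|]. specialize (Hq tau ltac:(lra)).
    apply Rmult_lt_compat_r with (r := tau) in Hq; [|lra].
    unfold Rdiv in Hq. rewrite Rmult_assoc, Rinv_l in Hq; lra.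
  - destruct (Hup eps He d Hd) as [tau [Htau Hq]]. exists tau. split; [assumption|].
    apply Rmult_lt_compat_r with (r := tau) in Hq; [|lra].
    unfold Rdiv in Hq. rewrite Rmult_assoc, Rinv_l in Hq; lra.
Qed.

Lemma continuity_pt_on_line n (f : Vec n -> R) y w t :
  continuous_at f (vadd y (vscal t w)) -> continuity_pt (fun s => f (vadd y (vscal s w))) t.
Proof.
  intros Hf eps He. destruct (Hf eps He) as [d [Hd Hball]].
  pose proof (vnorm_nonneg _ w).
  exists (d / (vnorm w + 1)). split; [apply Rdiv_lt_0_compat; lra|].
  intros s [_ Hs]. simpl in *. unfold Rdist in *. apply Hball.
  replace (vsub (vadd y (vscal s w)) (vadd y (vscal t w))) with (vscal (s - t) w) by vec_ring.
  rewrite vnorm_scal. pose proof (Rabs_pos (s - t)).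
  apply Rle_lt_trans with (Rabs (s - t) * (vnorm w + 1)); [nra|].
  apply Rmult_lt_compat_r with (r := vnorm w + 1) in Hs; [|lra].
  replace (d / (vnorm w + 1) * (vnorm w + 1)) with d in Hs by (field; lra). exact Hs.
Qed.

Section LStable.

Variables (n : nat) (f : Vec n -> R) (x : Vec n) (h : Vec n -> R) (r K : R).
Hypothesis HK : 0 <= K.
Hypothesis dini_h : forall u, dini f x u (Fin (h u)).
Hypothesis cont_f : forall y, vnorm (vsub y x) < r -> continuous_at f y.
Hypothesis stable_f : forall y u, vnorm (vsub y x) < r ->
  exists a b, dini f y u (Fin a) /\ dini f x u (Fin b) /\
    Rabs (a - b) <= K * vnorm (vsub y x) * vnorm u.

Lemma segment_estimate y w : vnorm (vsub y x) + vnorm w < r ->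
  Rabs (f (vadd y w) - f y - h w) <= K * (vnorm (vsub y x) + vnorm w) * vnorm w.
Proof.
  intros Hyw. set (R0 := vnorm (vsub y x) + vnorm w) in *.
  set (psi := fun t => f (vadd y (vscal t w))).
  pose proof (vnorm_nonneg _ w) as Hw.
  assert (Hdist : forall t, 0 <= t <= 1 -> vnorm (vsub (vadd y (vscal t w)) x) <= R0).
  { intros t Ht.
    replace (vsub (vadd y (vscal t w)) x) with (vadd (vsub y x) (vscal t w)) by vec_ring.
    eapply Rle_trans; [apply vnorm_triangle|]. rewrite vnorm_scal, Rabs_pos_eq by lra.
    unfold R0. nra. }
  assert (Hcont : forall t, 0 <= t <= 1 -> continuity_pt psi t).
  { intros t Ht. apply continuity_pt_on_line, cont_f. pose proof (Hdist t Ht). lra. }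
  assert (Hslope : forall t, 0 <= t < 1 -> exists a, dini f (vadd y (vscal t w)) w (Fin a) /\
                     Rabs (a - h w) <= K * R0 * vnorm w).
  { intros t Ht. pose proof (Hdist t ltac:(lra)) as Hd.
    destruct (stable_f (vadd y (vscal t w)) w ltac:(lra)) as [a [b [Ha [Hb Hab]]]].
    rewrite (dini_unique _ _ _ _ _ _ Hb (dini_h w)) in Hab.
    exists a. split; [assumption|]. eapply Rle_trans; [exact Hab|].
    apply Rmult_le_compat_r; [assumption|]. apply Rmult_le_compat_l; assumption. }
  assert (Hstep : forall t tau, psi (t + tau) = f (vadd (vadd y (vscal t w)) (vscal tau w))).
  { intros t tau. unfold psi. f_equal. vec_ring. }
  assert (Hpsi0 : psi 0 = f y) by (unfold psi; f_equal; vec_ring).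
  assert (Hpsi1 : psi 1 = f (vadd y w)) by (unfold psi; f_equal; vec_ring).
  apply Rabs_le. split.
  - apply Rle_plus_epsilon. intros eps He.
    enough ((h w - K * R0 * vnorm w - eps) * (1 - 0) <= psi 1 - psi 0) by lra.
    apply increment_ge_of_right_increments; [lra|assumption|].
    intros t Ht d Hd. destruct (Hslope t Ht) as [a [Ha Hab]]. apply Rabs_le_inv in Hab.
    destruct (dini_right_increments _ _ _ _ _ _ _ Ha He Hd) as [[tau [Htau Hinc]] _].
    exists tau. split; [assumption|]. rewrite Hstep. unfold psi. nra.
  - apply Rle_plus_epsilon. intros eps He.
    enough (psi 1 - psi 0 <= (h w + K * R0 * vnorm w + eps) * (1 - 0)) by lra.
    apply increment_le_of_right_increments; [lra|assumption|].
    intros t Ht d Hd. destruct (Hslope t Ht) as [a [Ha Hab]]. apply Rabs_le_inv in Hab.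
    destruct (dini_right_increments _ _ _ _ _ _ _ Ha He Hd) as [_ [tau [Htau Hinc]]].
    exists tau. split; [assumption|]. rewrite Hstep. unfold psi. nra.
Qed.

Lemma remainder_estimate v : vnorm v < r ->
  Rabs (f (vadd x v) - f x - h v) <= K * vnorm v ^ 2.
Proof.
  intros Hv. pose proof (segment_estimate x v) as H.
  replace (vsub x x) with (@vzero n) in H by vec_ring.
  rewrite vnorm_zero, Rplus_0_l in H.
  replace (K * vnorm v ^ 2) with (K * vnorm v * vnorm v) by ring. apply H, Hv.
Qed.

Lemma h_scal_pos c v : 0 < c -> h (vscal c v) = c * h v.
Proof.
  intros Hc. apply (dini_unique _ f x (vscal c v)); [apply dini_h|].
  apply dini_scal; [assumption|apply dini_h].
Qed.

Hypothesis Hr : 0 < r.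

Lemma h_additive u v : h (vadd u v) = h u + h v.
Proof.
  pose proof (vnorm_nonneg _ u). pose proof (vnorm_nonneg _ v).
  pose proof (vnorm_nonneg _ (vadd u v)).
  set (Nu := vnorm u) in *. set (Nv := vnorm v) in *. set (Nuv := vnorm (vadd u v)) in *.
  enough (Habs : Rabs (h (vadd u v) - h u - h v) <= 0)
    by (apply Rabs_le_inv in Habs; lra).
  apply (Rle_0_of_small_bound _ (K * (Nuv ^ 2 + Nu ^ 2 + (Nu + Nv) * Nv)) r (Nu + Nv + Nuv));
    [assumption|lra|].
  intros t Ht HtN.
  (* t (h (u + v) - h u - h v) is a signed sum of the three remainders below. *)
  pose proof (remainder_estimate (vscal t (vadd u v))) as Euv.
  pose proof (remainder_estimate (vscal t u)) as Eu.
  pose proof (segment_estimate (vadd x (vscal t u)) (vscal t v)) as Ev.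
  replace (vsub (vadd x (vscal t u)) x) with (vscal t u) in Ev by vec_ring.
  replace (vadd (vadd x (vscal t u)) (vscal t v)) with (vadd x (vscal t (vadd u v))) in Ev
    by vec_ring.
  rewrite !vnorm_scal, !Rabs_pos_eq, !h_scal_pos in * by lra.
  fold Nu Nv Nuv in Euv, Eu, Ev.
  specialize (Euv ltac:(nra)). specialize (Eu ltac:(nra)). specialize (Ev ltac:(nra)).
  apply Rabs_le_inv in Euv, Eu, Ev.
  apply Rmult_le_reg_l with t; [assumption|].
  rewrite <- (Rabs_pos_eq t) at 1 by lra. rewrite <- Rabs_mult.
  apply Rabs_le. split; nra.
Qed.

Lemma h_linear c v : h (vscal c v) = c * h v.
Proof.
  assert (H0 : h vzero = 0).
  { pose proof (h_additive vzero vzero) as H.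
    replace (vadd vzero vzero) with (@vzero n) in H by vec_ring. lra. }
  destruct (Rtotal_order c 0) as [Hc|[->|Hc]].
  - pose proof (h_additive (vscal c v) (vscal (- c) v)) as H.
    replace (vadd (vscal c v) (vscal (- c) v)) with (@vzero n) in H by vec_ring.
    rewrite (h_scal_pos (- c) v) in H by lra. lra.
  - replace (vscal 0 v) with (@vzero n) by vec_ring. rewrite H0. ring.
  - apply h_scal_pos, Hc.
Qed.

Lemma frechet_grad_of_inner g : (forall v, h v = inner g v) -> frechet_grad f x g.
Proof.
  intros Hg eps He. exists (Rmin r (eps / (K + 1))).
  split; [apply Rmin_glb_lt; [assumption|apply Rdiv_lt_0_compat; lra]|].
  intros y Hy. pose proof (Rmin_l r (eps / (K + 1))). pose proof (Rmin_r r (eps / (K + 1))).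
  pose proof (vnorm_nonneg _ (vsub y x)) as Hn.
  pose proof (remainder_estimate (vsub y x) ltac:(lra)) as E.
  replace (vadd x (vsub y x)) with y in E by vec_ring. rewrite Hg in E.
  eapply Rle_trans; [exact E|].
  assert (Hsmall : (K + 1) * vnorm (vsub y x) <= eps).
  { apply Rle_trans with ((K + 1) * (eps / (K + 1))); [apply Rmult_le_compat_l; lra|].
    right. field. lra. }
  nra.
Qed.

End LStable.

Lemma frechet_grad_dini n (f : Vec n -> R) x g v :
  frechet_grad f x g -> dini f x v (Fin (inner g v)).
Proof.
  intros Hg. pose proof (vnorm_nonneg _ v) as Hv. apply is_liminf_0plus_of_limit.
  intros eps He. destruct (Hg (eps / (2 * (vnorm v + 1)))) as [d [Hd Hfr]];
    [apply Rdiv_lt_0_compat; lra|].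
  exists (d / (vnorm v + 1)). split; [apply Rdiv_lt_0_compat; lra|]. intros t [Ht0 Ht].
  specialize (Hfr (vadd x (vscal t v))).
  replace (vsub (vadd x (vscal t v)) x) with (vscal t v) in Hfr by vec_ring.
  rewrite vnorm_scal, Rabs_pos_eq, inner_scal_r in Hfr by lra.
  assert (Htv : t * vnorm v < d).
  { apply Rle_lt_trans with (t * (vnorm v + 1)); [nra|].
    apply Rmult_lt_compat_r with (r := vnorm v + 1) in Ht; [|lra].
    replace (d / (vnorm v + 1) * (vnorm v + 1)) with d in Ht by (field; lra). exact Ht. }
  specialize (Hfr Htv).
  replace ((f (vadd x (vscal t v)) - f x) / t - inner g v)
    with ((f (vadd x (vscal t v)) - f x - t * inner g v) / t) by (field; lra).
  unfold Rdiv. rewrite Rabs_mult, Rabs_inv, (Rabs_pos_eq t) by lra.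
  apply Rmult_le_compat_r with (r := / t) in Hfr; [|left; apply Rinv_0_lt_compat; lra].
  eapply Rle_lt_trans; [exact Hfr|].
  replace (eps / (2 * (vnorm v + 1)) * (t * vnorm v) * / t)
    with (eps / 2 * (vnorm v / (vnorm v + 1))) by (field; lra).
  assert (vnorm v / (vnorm v + 1) < 1).
  { apply Rmult_lt_reg_r with (vnorm v + 1); [lra|].
    unfold Rdiv. rewrite Rmult_assoc, Rinv_l; lra. }
  nra.
Qed.

Definition local_min {n} (f : Vec n -> R) (x : Vec n) : Prop :=
  exists r, 0 < r /\ forall y, vnorm (vsub y x) < r -> f x <= f y.

Lemma local_min_of_isolated_min_2 n (f : Vec n -> R) x : isolated_min_2 f x -> local_min f x.
Proof.
  intros [r [C [Hr [HC Hmin]]]]. exists r. split; [assumption|].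
  intros y Hy. destruct (classic (y = x)) as [->|Hne]; [lra|].
  specialize (Hmin y Hy Hne). pose proof (pow2_ge_0 (vnorm (vsub y x))). nra.
Qed.

Lemma dini_nonneg_at_local_min n (f : Vec n -> R) x v a :
  local_min f x -> dini f x v (Fin a) -> 0 <= a.
Proof.
  intros [r [Hr Hmin]] [_ Hup]. apply Rnot_lt_le. intros Ha.
  pose proof (vnorm_nonneg _ v).
  destruct (Hup (- a) ltac:(lra) (r / (vnorm v + 1))) as [t [[Ht0 Ht] Hq]];
    [apply Rdiv_lt_0_compat; lra|].
  assert (Hfy : f x <= f (vadd x (vscal t v))).
  { apply Hmin. replace (vsub (vadd x (vscal t v)) x) with (vscal t v) by vec_ring.
    rewrite vnorm_scal, Rabs_pos_eq by lra.
    apply Rmult_lt_compat_r with (r := vnorm v + 1) in Ht; [|lra].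
    replace (r / (vnorm v + 1) * (vnorm v + 1)) with r in Ht by (field; lra). nra. }
  assert (0 <= (f (vadd x (vscal t v)) - f x) / t)
    by (apply Rle_mult_inv_pos; lra).
  lra.
Qed.

Definition increasing_nat (phi : nat -> nat) := forall k, (phi k < phi (S k))%nat.

Lemma increasing_nat_ge phi : increasing_nat phi -> forall k, (k <= phi k)%nat.
Proof. intros H k. induction k as [|k IH]; [lia|]. specialize (H k). lia. Qed.

Lemma increasing_nat_lt phi : increasing_nat phi -> forall a b, (a < b)%nat -> (phi a < phi b)%nat.
Proof. intros H a b Hab. induction Hab as [|b Hab IH]; [apply H|]. specialize (H b). lia. Qed.

Lemma increasing_nat_comp phi psi :
  increasing_nat phi -> increasing_nat psi -> increasing_nat (fun k => phi (psi k)).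
Proof. intros Hphi Hpsi k. apply increasing_nat_lt; [assumption|apply Hpsi]. Qed.

Lemma cluster_point_subseq (u : nat -> R) l :
  ValAdh u l -> exists phi, increasing_nat phi /\ Un_cv (fun k => u (phi k)) l.
Proof.
  intros Hadh.
  assert (Hnext : forall N, exists p, (N < p)%nat /\ Rabs (u p - l) < / INR (S N)).
  { intros N. assert (Hpos : 0 < / INR (S N)) by (apply Rinv_0_lt_compat, lt_0_INR; lia).
    destruct (Hadh (disc l (mkposreal _ Hpos)) (S N)) as [p [Hp Hu]];
      [now exists (mkposreal _ Hpos)|].
    exists p. split; [lia|exact Hu]. }
  destruct (functional_choice _ Hnext) as [G HG].
  exists (fun k => Nat.iter (S k) G 0%nat). split.
  - intros k. exact (proj1 (HG (Nat.iter (S k) G 0%nat))).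
  - intros eps He. destruct (archimed_cor1 eps He) as [N [HN HN0]].
    exists N. intros k Hk. destruct k as [|k]; [lia|].
    assert (Hge : (k <= Nat.iter (S k) G 0)%nat).
    { apply (increasing_nat_ge (fun k => Nat.iter (S k) G 0%nat)).
      intros j. exact (proj1 (HG (Nat.iter (S j) G 0%nat))). }
    unfold Rdist. simpl Nat.iter. eapply Rlt_le_trans; [apply HG|].
    apply Rle_trans with (/ INR N); [|lra].
    apply Rinv_le_contravar; [apply lt_0_INR; lia|apply le_INR; simpl in Hge; lia].
Qed.

Lemma bolzano_weierstrass_R M (u : nat -> R) : (forall k, Rabs (u k) <= M) ->
  exists phi l, increasing_nat phi /\ Un_cv (fun k => u (phi k)) l.
Proof.
  intros Hb. destruct (Bolzano_Weierstrass u (fun c => - M <= c <= M) (compact_P3 _ _))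
    as [l Hl]; [intros k; apply Rabs_le_inv, Hb|].
  destruct (cluster_point_subseq u l Hl) as [phi Hphi]. now exists phi, l.
Qed.

Definition Vec_cv {n} (u : nat -> Vec n) (c : Vec n) :=
  forall eps, 0 < eps -> exists N, forall k, (N <= k)%nat -> vnorm (vsub (u k) c) < eps.

Lemma bolzano_weierstrass_Vec n M (u : nat -> Vec n) : (forall k i, Rabs (u k i) <= M) ->
  exists phi c, increasing_nat phi /\ Vec_cv (fun k => u (phi k)) c.
Proof.
  revert u. induction n as [|n IH]; intros u Hb.
  - exists (fun k => k), vzero. split; [intros k; lia|].
    intros eps He. exists 0%nat. intros k _. unfold vnorm, inner. simpl. rewrite sqrt_0. exact He.
  - destruct (IH (fun k i => u k (Fin.FS i))) as [phi1 [c [Hphi1 Hc]]]; [intros; apply Hb|].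
    destruct (bolzano_weierstrass_R M (fun k => u (phi1 k) Fin.F1)) as [phi2 [l [Hphi2 Hl]]];
      [intros; apply Hb|].
    exists (fun k => phi1 (phi2 k)), (vcons l c).
    split; [apply increasing_nat_comp; assumption|].
    intros eps He. destruct (Hc (eps / 2)) as [N1 HN1]; [lra|].
    destruct (Hl (eps / 2)) as [N2 HN2]; [lra|].
    exists (max N1 N2). intros k Hk. eapply Rle_lt_trans; [apply vnorm_cons|].
    specialize (HN2 k ltac:(lia)). unfold Rdist in HN2.
    specialize (HN1 (phi2 k)). pose proof (increasing_nat_ge _ Hphi2 k).
    specialize (HN1 ltac:(lia)). unfold vsub in *. simpl. lra.
Qed.

Lemma unit_sphere_cluster_point n (u : nat -> Vec n) : (forall k, vnorm (u k) = 1) ->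
  exists c, vnorm c = 1 /\
    forall eps N, 0 < eps -> exists k, (N <= k)%nat /\ vnorm (vsub (u k) c) < eps.
Proof.
  intros Hu. destruct (bolzano_weierstrass_Vec n 1 u) as [phi [c [Hphi Hc]]];
    [intros k i; rewrite <- (Hu k); apply vnorm_coord|].
  exists c. split.
  - apply cond_eq. intros eps He. destruct (Hc eps He) as [N HN].
    rewrite <- (Hu (phi N)), Rabs_minus_sym.
    eapply Rle_lt_trans; [apply vnorm_sub_ge|]. apply HN. lia.
  - intros eps N He. destruct (Hc eps He) as [N' HN'].
    exists (phi (max N N')). split; [|apply HN'; lia].
    pose proof (increasing_nat_ge _ Hphi (max N N')). lia.
Qed.

Section DirectionalGrowth.

Variables (n : nat) (f : Vec n -> R) (x : Vec n) (r K : R).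
Hypothesis Hr : 0 < r.
Hypothesis HK : 0 <= K.
Hypothesis flat_f : forall y w, vnorm (vsub y x) + vnorm w < r ->
  Rabs (f (vadd y w) - f y) <= K * (vnorm (vsub y x) + vnorm w) * vnorm w.

Lemma growth_near_direction c d alpha :
  vnorm c = 1 -> 0 < d -> 0 < alpha ->
  (forall t, 0 < t < d -> f (vadd x (vscal t c)) >= f x + alpha * t ^ 2) ->
  exists eta delta, 0 < eta /\ 0 < delta /\
    forall u t, vnorm (vsub u c) < eta -> 0 < t < delta ->
      f (vadd x (vscal t u)) >= f x + alpha / 2 * t ^ 2.
Proof.
  intros Hc Hd Halpha Hgrow.
  set (eta := Rmin 1 (alpha / (4 * K + 1))).
  assert (Heta1 : eta <= 1) by apply Rmin_l.
  assert (Heta : eta * (4 * K + 1) <= alpha).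
  { apply Rle_trans with (alpha / (4 * K + 1) * (4 * K + 1));
      [apply Rmult_le_compat_r; [lra|apply Rmin_r]|right; field; lra]. }
  exists eta, (Rmin d (r / 2)). split; [apply Rmin_glb_lt; [lra|apply Rdiv_lt_0_compat; lra]|].
  split; [apply Rmin_glb_lt; lra|].
  intros u t Hu [Ht0 Ht]. pose proof (Rmin_l d (r / 2)). pose proof (Rmin_r d (r / 2)).
  pose proof (vnorm_nonneg _ (vsub u c)) as He.
  (* Tilting the direction from c to u changes f by at most 2 K eta t^2 <= alpha t^2 / 2. *)
  pose proof (flat_f (vadd x (vscal t c)) (vscal t (vsub u c))) as Hf.
  replace (vsub (vadd x (vscal t c)) x) with (vscal t c) in Hf by vec_ring.
  replace (vadd (vadd x (vscal t c)) (vscal t (vsub u c))) with (vadd x (vscal t u)) in Hf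
    by vec_ring.
  rewrite !vnorm_scal, Rabs_pos_eq, Hc in Hf by lra.
  assert (Htu : t * vnorm (vsub u c) <= t * eta) by (apply Rmult_le_compat_l; lra).
  assert (Heta_t : t * eta <= t * 1) by (apply Rmult_le_compat_l; lra).
  specialize (Hf ltac:(lra)). apply Rabs_le_inv in Hf.
  specialize (Hgrow t ltac:(lra)).
  assert (K * (t * 1 + t * vnorm (vsub u c)) * (t * vnorm (vsub u c)) <= alpha / 2 * t ^ 2).
  { assert (Hprod : (t * 1 + t * vnorm (vsub u c)) * (t * vnorm (vsub u c)) <= (2 * t) * (t * eta))
      by (apply Rmult_le_compat; nra).
    apply Rle_trans with (K * ((2 * t) * (t * eta))).
    - rewrite Rmult_assoc. apply Rmult_le_compat_l; assumption.
    - assert (0 < eta) by (apply Rmin_glb_lt; [lra|apply Rdiv_lt_0_compat; lra]).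
      assert (4 * K * eta <= alpha) by lra. nra. }
  lra.
Qed.

Lemma not_isolated_min_2_seq : ~ isolated_min_2 f x ->
  exists (u : nat -> Vec n) (t : nat -> R), forall k,
    vnorm (u k) = 1 /\ 0 < t k < / INR (S k) /\
    f (vadd x (vscal (t k) (u k))) <= f x + / INR (S k) * t k ^ 2.
Proof.
  intros Hn.
  assert (Hbad : forall k, exists z, vnorm (vsub z x) < / INR (S k) /\ z <> x /\
            f z <= f x + / INR (S k) * vnorm (vsub z x) ^ 2).
  { intros k. assert (Hk : 0 < / INR (S k)) by (apply Rinv_0_lt_compat, lt_0_INR; lia).
    apply NNPP. intros Hno. apply Hn. exists (/ INR (S k)), (/ INR (S k)).
    do 2 (split; [assumption|]). intros z Hz Hzx. apply Rnot_le_gt. intros Hf.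
    exact (Hno (ex_intro _ z (conj Hz (conj Hzx Hf)))). }
  destruct (functional_choice _ Hbad) as [z Hz].
  exists (fun k => vscal (/ vnorm (vsub (z k) x)) (vsub (z k) x)), (fun k => vnorm (vsub (z k) x)).
  intros k. destruct (Hz k) as [Hzk [Hne Hf]].
  assert (Hpos : 0 < vnorm (vsub (z k) x)).
  { destruct (Rle_lt_or_eq_dec _ _ (vnorm_nonneg _ (vsub (z k) x))) as [|Heq]; [assumption|].
    exfalso. apply Hne. pose proof (vnorm_eq0 _ _ (eq_sym Heq)) as H0.
    apply functional_extensionality. intros i.
    apply (f_equal (fun v => v i)) in H0. unfold vsub, vzero in H0. lra. }
  split; [|split; [split; assumption|]].
  - rewrite vnorm_scal, Rabs_pos_eq by (left; apply Rinv_0_lt_compat, Hpos).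
    field. lra.
  - set (N := vnorm (vsub (z k) x)) in *.
    replace (vadd x (vscal N (vscal (/ N) (vsub (z k) x)))) with (z k); [assumption|].
    apply functional_extensionality. intros i. unfold vadd, vscal, vsub. field. lra.
Qed.

Lemma isolated_min_2_of_directional_growth :
  (forall c, vnorm c = 1 -> exists d alpha, 0 < d /\ 0 < alpha /\
     forall t, 0 < t < d -> f (vadd x (vscal t c)) >= f x + alpha * t ^ 2) ->
  isolated_min_2 f x.
Proof.
  intros Hgrow. apply NNPP. intros Hn.
  destruct (not_isolated_min_2_seq Hn) as [u [t Hut]].
  destruct (unit_sphere_cluster_point n u (fun k => proj1 (Hut k))) as [c [Hc Hclust]].
  destruct (Hgrow c Hc) as [d [alpha [Hd [Halpha Hgc]]]].
  destruct (growth_near_direction c d alpha Hc Hd Halpha Hgc)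
    as [eta [delta [Heta [Hdelta Hnear]]]].
  destruct (archimed_cor1 (Rmin delta (alpha / 2))) as [N [HN HN0]];
    [apply Rmin_glb_lt; lra|].
  destruct (Hclust eta N Heta) as [k [Hk Huk]].
  destruct (Hut k) as [_ [[Htk0 Htk] Hf]].
  assert (Hsmall : / INR (S k) <= / INR N)
    by (apply Rinv_le_contravar; [apply lt_0_INR; lia|apply le_INR; lia]).
  pose proof (Rmin_l delta (alpha / 2)). pose proof (Rmin_r delta (alpha / 2)).
  specialize (Hnear (u k) (t k) Huk ltac:(lra)).
  assert (0 < t k ^ 2) by (apply pow_lt; lra).
  assert (/ INR (S k) * t k ^ 2 < alpha / 2 * t k ^ 2)
    by (apply Rmult_lt_compat_r; lra).
  lra.
Qed.

End DirectionalGrowth.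

Lemma dini_derivative_of_l_stable n (f : Vec n -> R) x :
  l_stable f x -> exists h, forall u, dini f x u (Fin (h u)).
Proof.
  intros [r [K [Hr [_ Hstab]]]]. apply (functional_choice (fun u b => dini f x u (Fin b))).
  intros u. destruct (Hstab x u) as [a [b [_ [Hb _]]]]; [|now exists b].
  replace (vsub x x) with (@vzero n) by vec_ring. rewrite vnorm_zero. assumption.
Qed.

Lemma l_stable_on_common_ball n (f : Vec n -> R) x :
  continuous_near f x -> l_stable f x ->
  exists r K, 0 < r /\ 0 <= K /\
    (forall y, vnorm (vsub y x) < r -> continuous_at f y) /\
    (forall y u, vnorm (vsub y x) < r -> exists a b, dini f y u (Fin a) /\
       dini f x u (Fin b) /\ Rabs (a - b) <= K * vnorm (vsub y x) * vnorm u).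
Proof.
  intros [r2 [Hr2 Hcont]] [r1 [K [Hr1 [HK Hstab]]]].
  pose proof (Rmin_l r1 r2). pose proof (Rmin_r r1 r2).
  exists (Rmin r1 r2), K. repeat split.
  - apply Rmin_glb_lt; assumption.
  - lra.
  - intros y Hy. apply Hcont. lra.
  - intros y u Hy. apply Hstab. lra.
Qed.

Theorem theorem3 (n : nat) (f : Vec n -> R) (xb : Vec n) :
  continuous_near f xb ->
  l_stable f xb ->
  strongly_pseudoconvex f xb ->
  (exists g : Vec n, frechet_grad f xb g) /\
  (isolated_min_2 f xb <-> frechet_grad f xb vzero).
Proof.
  intros Hcont Hstab Hspc.
  destruct (dini_derivative_of_l_stable _ _ _ Hstab) as [h Hh].
  destruct (l_stable_on_common_ball _ _ _ Hcont Hstab)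
    as [r [K [Hr [HK [Hcont_r Hstab_r]]]]].
  pose proof (h_linear _ _ _ _ _ _ HK Hh Hcont_r Hstab_r Hr) as Hlin.
  pose proof (frechet_grad_of_inner _ _ _ _ _ _ HK Hh Hcont_r Hstab_r Hr) as Hgrad.
  destruct (linear_functional_inner n h (h_additive _ _ _ _ _ _ HK Hh Hcont_r Hstab_r Hr) Hlin)
    as [g Hg].
  split; [exists g; apply Hgrad, Hg|]. split.
  - intros Hmin. apply Hgrad. intros v. rewrite inner_zero_l.
    pose proof (local_min_of_isolated_min_2 _ _ _ Hmin) as Hloc.
    pose proof (dini_nonneg_at_local_min _ _ _ _ _ Hloc (Hh v)).
    pose proof (dini_nonneg_at_local_min _ _ _ _ _ Hloc (Hh (vscal (-1) v))).
    rewrite Hlin in *. lra.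
  - intros Hgrad0.
    assert (Hdini0 : forall v, dini f xb v (Fin 0))
      by (intros v; rewrite <- (inner_zero_l _ v); apply frechet_grad_dini, Hgrad0).
    apply (isolated_min_2_of_directional_growth n f xb r K Hr HK).
    + intros y w Hyw.
      pose proof (segment_estimate _ _ _ _ _ _ HK Hh Hcont_r Hstab_r y w Hyw) as E.
      rewrite (dini_unique _ _ _ _ _ _ (Hh w) (Hdini0 w)), Rminus_0_r in E. exact E.
    + intros c Hc. apply Hspc, Hdini0. assumption.
Qed.
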